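(* Let $p\ge2$ and consider the dynamic panel logit AR($p$) model with $T=3$: $(Y^{(0)},X,A)$ has an arbitrary joint distribution with $Y^{(0)}=(Y_{1-p},\dots,Y_0)\in\{0,1\}^p$, $X=(X_1,X_2,X_3)\in\mathbb{R}^{K\times3}$, $A\in\mathbb{R}$, and conditionally on $(Y^{(0)},X,A)$ the outcomes $Y=(Y_1,Y_2,Y_3)$ satisfy, for $t\in\{1,2,3\}$, $$\Pr(Y_t=1\mid Y_{1-p},\dots,Y_{t-1},X,A)=\frac{\exp(X_t'\beta_0+\sum_{\ell=1}^pY_{t-\ell}\gamma_{0,\ell}+A)}{1+\exp(X_t'\beta_0+\sum_{\ell=1}^pY_{t-\ell}\gamma_{0,\ell}+A)},$$ with true parameters $\beta_0\in\mathbb{R}^K$, $\gamma_0=(\gamma_{0,1},\dots,\gamma_{0,p})\in\mathbb{R}^p$. Let $0_r,1_r$ be $r$-vectors of zeros and ones, $x_{ts}=x_t-x_s$, and for $y=(y_1,y_2,y_3)$ define $$m_{(0_p)}=\begin{cases}e^{x_{12}'\beta}&y=(0,1,0),\\ e^{x_{12}'\beta-\gamma_1}&y=(0,1,1),\\ -1&(y_1,y_2)=(1,0),\\0&\text{otherwise},\end{cases}\qquad m_{(0,1_{p-1})}=\begin{cases}-1&(y_1,y_2)=(0,1),\\ e^{x_{21}'\beta-\gamma_1+\gamma_p}&y=(1,0,0),\\ e^{x_{21}'\beta+\gamma_p}&y=(1,0,1),\\0&\text{otherwise},\end{cases}$$ $$m_{(1,0_{p-1})}=\begin{cases}e^{x_{12}'\beta+\gamma_p}&y=(0,1,0),\\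 e^{x_{12}'\beta-\gamma_1+\gamma_p}&y=(0,1,1),\\ -1&(y_1,y_2)=(1,0),\\0&\text{otherwise},\end{cases}\qquad m_{(1_p)}=\begin{cases}-1&(y_1,y_2)=(0,1),\\ e^{x_{21}'\beta-\gamma_1}&y=(1,0,0),\\ e^{x_{21}'\beta}&y=(1,0,1),\\0&\text{otherwise},\end{cases}$$ as functions of $(y,x,\beta,\gamma)$. For $k\in\{1,\dots,K\}$ let $\mathcal{X}_{k,+}=\{x\in\mathbb{R}^{K\times3}:x_{k,1}<x_{k,2}\}$, $\mathcal{X}_{k,-}=\{x\in\mathbb{R}^{K\times3}:x_{k,1}>x_{k,2}\}$ (with $x_{k,t}$ the $k$-th component of $x_t$), and for $s\in\{-,+\}^K$ let $\mathcal{X}_s=\bigcap_{k=1}^K\mathcal{X}_{k,s_k}$. (i) Let $y^{(0)}\in\{0_p,1_p\}$. Assume that for all $\epsilon>0$ and $s\in\{-,+\}^K$, $\Pr(Y^{(0)}=y^{(0)},X\in\mathcal{X}_s,\|X_2-X_3\|\le\epsilon)>0$, and that the expectations below are well-defined. Then $\mathbb{E}[m_{y^{(0)}}(Y,X,\beta,\gamma)\mid Y^{(0)}=y^{(0)},X\in\mathcal{X}_s,X_2=X_3]=0$ for all $s\in\{-,+\}^K$ if and only if $\beta=\beta_0$ and $\gamma_1=\gamma_{0,1}$. (ii) Let $y^{(0)}\in\{(0,1_{p-1}),(1,0_{p-1})\}$. Assume that for all $\epsilon>0$, $\Pr(Y^{(0)}=y^{(0)},\|X_2-X_3\|\le\epsilon)>0$,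 and that the expectation below is well-defined. Then $\mathbb{E}[m_{y^{(0)}}(Y,X,\beta_0,(\gamma_{0,1},\gamma_2,\dots,\gamma_p))\mid Y^{(0)}=y^{(0)},X_2=X_3]=0$ if and only if $\gamma_p=\gamma_{0,p}$.
   Context: Expectations are taken under the true data distribution (generated with $\beta_0,\gamma_0$), while moment functions are evaluated at candidate parameter values. The conditioning on $X_2=X_3$ is conditioning on the event that the second and third regressor vectors coincide. *)

From HB Require Import structures.
From mathcomp Require Import all_boot all_order all_algebra.
From mathcomp Require Import all_classical all_reals all_analysis.
Set Implicit Arguments. Unset Strict Implicit. Unset Printing Implicit Defensive.
Import Order.TTheory GRing.Theory Num.Theory.
Import numFieldNormedType.Exports.
Local Open Scope classical_set_scope.
Local Open Scope ring_scope.

Section Model.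
Variables (R : realType) (p K : nat).

(* Space of (X, A): X is a K x 3 matrix whose column t-1 is X_t; A real.
   Borel sigma-algebra (generated by the open sets of the product topology). *)
Definition XA := g_sigma_algebraType (@open ('M[R]_(K, 3) * R)%type).

Definition t1 : 'I_3 := @Ordinal 3 0 isT.
Definition t2 : 'I_3 := @Ordinal 3 1 isT.
Definition t3 : 'I_3 := @Ordinal 3 2 isT.

(* 1-based coordinate l of gamma in R^p : gamma_l *)
Definition gam (g : 'I_p -> R) (l : nat) : R := nth 0 [seq g i | i <- enum 'I_p] l.-1.

Definition xb (x : 'M[R]_(K, 3)) (b : 'I_K -> R) (t : nat) : R :=
  \sum_(k < K) x k (inord t.-1) * b k.

(* Outcome history (Y_{1-p}, ..., Y_0, Y_1, Y_2, Y_3);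
   y0 i is Y_{1-p+i}, y = (Y_1, Y_2, Y_3). Y_u sits at position u + p - 1. *)
Definition hist (y0 : {ffun 'I_p -> bool}) (y : bool * bool * bool) : seq bool :=
  [seq y0 i | i <- enum 'I_p] ++ [:: y.1.1; y.1.2; y.2].

(* Y_{t - l} for t in {1,2,3}, l in {1..p} *)
Definition Ylag y0 y (t l : nat) : bool := nth false (hist y0 y) (t + p.-1 - l).

Definition logistic (u : R) : R := expR u / (1 + expR u).

Definition lindex y0 y (x : 'M[R]_(K, 3)) (a : R) (b : 'I_K -> R) (g : 'I_p -> R)
    (t : nat) : R :=
  xb x b t + \sum_(1 <= l < p.+1) (Ylag y0 y t l)%:R * gam g l + a.

Definition Yt (y : bool * bool * bool) (t : nat) : bool :=
  nth false [:: y.1.1; y.1.2; y.2] t.-1.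

Definition prob y0 (x : 'M[R]_(K, 3)) (a : R) (b : 'I_K -> R) (g : 'I_p -> R)
    (y : bool * bool * bool) : R :=
  \prod_(1 <= t < 4)
    (if Yt y t then logistic (lindex y0 y x a b g t)
     else 1 - logistic (lindex y0 y x a b g t)).

Definition y0_0p : {ffun 'I_p -> bool} := [ffun _ => false].
Definition y0_1p : {ffun 'I_p -> bool} := [ffun _ => true].
Definition y0_01 : {ffun 'I_p -> bool} := [ffun i => val i != 0%N].
Definition y0_10 : {ffun 'I_p -> bool} := [ffun i => val i == 0%N].

Definition x12b x b := xb x b 1 - xb x b 2.
Definition x21b x b := xb x b 2 - xb x b 1.

Definition m_0p (y : bool * bool * bool) x b g : R :=
  match y with
  | (false, true, false) => expR (x12b x b)
  | (false, true, true) => expR (x12b x b - gam g 1)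
  | (true, false, _) => -1
  | _ => 0
  end.
Definition m_01 (y : bool * bool * bool) x b g : R :=
  match y with
  | (false, true, _) => -1
  | (true, false, false) => expR (x21b x b - gam g 1 + gam g p)
  | (true, false, true) => expR (x21b x b + gam g p)
  | _ => 0
  end.
Definition m_10 (y : bool * bool * bool) x b g : R :=
  match y with
  | (false, true, false) => expR (x12b x b + gam g p)
  | (false, true, true) => expR (x12b x b - gam g 1 + gam g p)
  | (true, false, _) => -1
  | _ => 0
  end.
Definition m_1p (y : bool * bool * bool) x b g : R :=
  match y with
  | (false, true, _) => -1
  | (true, false, false) => expR (x21b x b - gam g 1)
  | (true, false, true) => expR (x21b x b)
  | _ => 0
  end.

Definition mom (y0 : {ffun 'I_p -> bool}) :=
  if y0 == y0_0p then m_0p else if y0 == y0_1p then m_1p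
  else if y0 == y0_01 then m_01 else if y0 == y0_10 then m_10
  else fun _ _ _ _ => 0.

(* E[m_{y0}(Y, X, b, g) | Y^(0) = y0, X = x, A = a] under the true (b0, g0) *)
Definition cmom b0 g0 y0 (b : 'I_K -> R) (g : 'I_p -> R) (z : XA) : R :=
  \sum_(y : bool * bool * bool) prob y0 z.1 z.2 b0 g0 y * mom y0 y z.1 b g.

(* the sets X_s (s k = true means sign +) and the events on X *)
Definition Xs (s : {ffun 'I_K -> bool}) : set XA :=
  [set z : XA | forall k : 'I_K, if s k then z.1 k t1 < z.1 k t2 else z.1 k t1 > z.1 k t2].
Definition Xnear (e : R) : set XA := [set z : XA | `|col t2 z.1 - col t3 z.1| <= e].
Definition Xslice : set XA := [set z : XA | col t2 z.1 = col t3 z.1].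

(* nu is the conditional law of (X, A) given the positive-probability event
   S (under the sub-law mu0 = law of (X,A) on {Y^(0) = y0}) and X_2 = X_3:
   it is the weak limit, as e -> 0+, of the laws conditioned on
   S /\ ||X_2 - X_3|| <= e, and it is carried by S /\ X_2 = X_3. *)
Definition cond_law_slice (mu0 : {measure set XA -> \bar R}) (S : set XA)
    (nu : probability XA R) : Prop :=
  nu (S `&` Xslice) = 1%E /\
  forall f : ('M[R]_(K, 3) * R)%type -> R,
    continuous f -> (exists M : R, forall z, `|f z| <= M) ->
    (fun e : R => fine (\int[mu0]_(z in S `&` Xnear e) (f z)%:E)
                  / fine (mu0 (S `&` Xnear e)))
      @ 0^'+ --> fine (\int[nu]_z (f (z : XA))%:E).

(* E[m_{y0}(Y,X,b,g) | Y^(0) = y0, (X,A) ~ nu], by iterated expectations *)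
Definition CE b0 g0 y0 (nu : probability XA R) b g : \bar R :=
  \int[nu]_z (cmom b0 g0 y0 b g z)%:E.

End Model.

(* On the slice X_2 = X_3 the conditional expectation given (X, A) of each moment is an explicit
   positive multiple of [expgap E u d] = (e^u - 1) + E (e^(u + d) - 1) with E > 0, where
   d = gamma_{0,1} - gamma_1 and u = +-(x_1 - x_2)'(beta - beta_0) in part (i), and of
   e^(gamma_p - gamma_{0,p}) - 1 in part (ii).  On X_s with s_k the sign of beta_k - beta_{0,k}
   (or its opposite) every term of u has the same sign, and u = 0 only if beta = beta_0.
   Choosing the orientation of s according to the sign of d makes the integrand of constant
   strict sign unless beta = beta_0 and gamma_1 = gamma_{0,1}, so its integral cannot vanish. *)

From HB Require Import structures.
From mathcomp Require Import all_boot all_order all_algebra.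
From mathcomp Require Import all_classical all_reals all_analysis.
From mathcomp Require Import zify ring lra.
Set Implicit Arguments.
Unset Strict Implicit.
Unset Printing Implicit Defensive.
Import Order.TTheory GRing.Theory Num.Theory.
Import numFieldNormedType.Exports.
Local Open Scope classical_set_scope.
Local Open Scope ring_scope.

Section BorelSets.
Variables (R : realType) (K : nat).

Lemma continuous_entry (i : 'I_K) (j : 'I_3) :
  continuous (fun z : ('M[R]_(K, 3) * R)%type => z.1 i j).
Proof.
move=> z; apply: (@continuous_comp _ _ _ fst (fun M : 'M[R]_(K, 3) => M i j)).
  exact: cvg_fst.
exact: coord_continuous.
Qed.

Lemma continuous_entryB (i : 'I_K) (j j' : 'I_3) :
  continuous (fun z : ('M[R]_(K, 3) * R)%type => z.1 i j' - z.1 i j).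
Proof. by move=> z; apply: continuousB; exact: continuous_entry. Qed.

Lemma open_measurable (A : set (XA R K)) :
  open (A : set ('M[R]_(K, 3) * R)%type) -> measurable A.
Proof. exact: sub_sigma_algebra. Qed.

Lemma measurable_entry_lt (i : 'I_K) (j j' : 'I_3) :
  measurable [set z : XA R K | z.1 i j < z.1 i j'].
Proof.
apply: open_measurable.
have -> : [set z : ('M[R]_(K, 3) * R)%type | z.1 i j < z.1 i j'] =
    (fun z : ('M[R]_(K, 3) * R)%type => z.1 i j' - z.1 i j) @^-1` [set x | 0 < x].
  by apply/seteqP; split => z /=; rewrite subr_gt0.
by apply: open_comp => [z _|]; [exact: continuous_entryB | exact: open_gt].
Qed.

Lemma measurable_entry_eq (i : 'I_K) (j j' : 'I_3) :
  measurable [set z : XA R K | z.1 i j = z.1 i j'].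
Proof.
rewrite -[X in measurable X]setCK; apply: measurableC; apply: open_measurable.
have -> : ~` [set z : ('M[R]_(K, 3) * R)%type | z.1 i j = z.1 i j'] =
    (fun z : ('M[R]_(K, 3) * R)%type => z.1 i j' - z.1 i j) @^-1` (~` [set 0]).
  apply/seteqP; split => z /= neq eq; apply: neq.
    by apply/esym/eqP; rewrite -subr_eq0 eq.
  by rewrite eq subrr.
by apply: open_comp => [z _|]; [exact: continuous_entryB | rewrite openC; exact: closed_eq].
Qed.

Lemma measurable_Xs (s : {ffun 'I_K -> bool}) : measurable (@Xs R K s).
Proof.
have -> : @Xs R K s = \bigcap_(k in [set: 'I_K])
    [set z : XA R K | if s k then z.1 k t1 < z.1 k t2 else z.1 k t2 < z.1 k t1].
  by apply/seteqP; split => [z Hz k _ | z Hz k]; [exact: Hz | exact: Hz].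
apply: fin_bigcap_measurable; first exact: finite_finset.
by move=> k _; case: (s k); exact: measurable_entry_lt.
Qed.

Lemma measurable_Xslice : measurable (@Xslice R K).
Proof.
have -> : @Xslice R K = \bigcap_(k in [set: 'I_K]) [set z : XA R K | z.1 k t2 = z.1 k t3].
  apply/seteqP; split => z /=.
    by move=> /matrixP Hz k _; have := Hz k ord0; rewrite !mxE.
  by move=> Hz; apply/matrixP => k i; rewrite !mxE; exact: Hz.
apply: fin_bigcap_measurable; first exact: finite_finset.
by move=> k _; exact: measurable_entry_eq.
Qed.

End BorelSets.

Section IntegralAlmostSure.
Context d (T : measurableType d) (R : realType) (P : probability T R).
Variables (S : set T) (f : T -> R).
Hypotheses (mS : measurable S) (PS : P S = 1%E)
  (intf : P.-integrable setT (fun x => (f x)%:E)).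

Lemma integral_setT_as : (\int[P]_x (f x)%:E = \int[P]_(x in S) (f x)%:E)%E.
Proof.
rewrite (negligible_integral (N := ~` S)) ?setTD ?setCK //; first exact: measurableC.
by have := probability_setC P mS; rewrite PS subee.
Qed.

Lemma integral_eq0_as : (forall x, S x -> f x = 0) -> (\int[P]_x (f x)%:E = 0)%E.
Proof.
by move=> f0; rewrite integral_setT_as; apply: integral0_eq => x Sx; rewrite f0.
Qed.

Lemma integral_gt0_as : (forall x, S x -> 0 < f x) -> (0 < \int[P]_x (f x)%:E)%E.
Proof.
move=> f0; rewrite integral_setT_as.
have ge0 : (0 <= \int[P]_(x in S) (f x)%:E)%E.
  by apply: integral_ge0 => x Sx; rewrite lee_fin ltW ?f0.
rewrite lt0e ge0 andbT; apply/negP => /eqP int0.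
have mf := measurable_funS measurableT (@subsetT _ S) (measurable_int _ intf).
have : (\int[P]_(x in S) `|(f x)%:E| = 0)%E.
  rewrite -int0; apply: eq_integral => x /[!inE] Sx.
  by rewrite gee0_abs // lee_fin ltW ?f0.
case/(ae_eq_integral_abs _ mS mf) => N [mN PN0 SN].
have : (P S <= P N)%E.
  apply: le_measure; rewrite ?inE //.
  by move=> x Sx; apply: SN => /= /(_ Sx) [] fx0; move: (f0 x Sx); rewrite fx0 ltxx.
by rewrite PS PN0 lee_fin ler10.
Qed.

End IntegralAlmostSure.

Lemma integral_lt0_as d (T : measurableType d) (R : realType) (P : probability T R)
    (S : set T) (f : T -> R) :
  measurable S -> P S = 1%E -> P.-integrable setT (fun x => (f x)%:E) ->
  (forall x, S x -> f x < 0) -> (\int[P]_x (f x)%:E < 0)%E.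
Proof.
move=> mS PS intf f0.
have intNf : P.-integrable setT (fun x => (- f x)%:E) by exact: (integrableN intf).
have Nf0 x : S x -> 0 < - f x by rewrite oppr_gt0; exact: f0.
have := @integral_gt0_as d T R P S (fun x => - f x) mS PS intNf Nf0.
rewrite (eq_integral (fun x => - (f x)%:E))%E // integralN ?oppe_gt0 //.
by rewrite fin_num_adde_defl // fin_numN; exact: integrable_neg_fin_num.
Qed.

Section ExpGap.
Variable R : realType.

Definition expgap (E u d : R) := (expR u - 1) + E * (expR (u + d) - 1).

Lemma expgap00 E : expgap E 0 0 = 0.
Proof. by rewrite /expgap addr0 expR0 subrr mulr0 addr0. Qed.

Lemma expgap_lt0 E u d : 0 < E -> u <= 0 -> d <= 0 -> u < 0 \/ d < 0 ->
  expgap E u d < 0.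
Proof.
move=> E0 u0 d0 ud; rewrite /expgap.
have eu : expR u <= 1 by rewrite expR_le1.
have eud : expR (u + d) <= 1 by rewrite expR_le1; lra.
case: ud => [u_lt0|d_lt0].
- have : expR u < 1 by rewrite expR_lt1.
  nra.
- have : expR (u + d) < 1 by rewrite expR_lt1; lra.
  nra.
Qed.

Lemma expgap_gt0 E u d : 0 < E -> 0 <= u -> 0 < d -> 0 < expgap E u d.
Proof.
move=> E0 u0 d0; rewrite /expgap.
have eu : 1 <= expR u by rewrite leNgt expR_lt1 -leNgt.
have eud : 1 < expR (u + d) by rewrite expR_gt1; lra.
nra.
Qed.

End ExpGap.

Section Regressors.
Variables (R : realType) (K : nat).

Lemma inord_t1 : (inord 0 : 'I_3) = t1. Proof. by apply: val_inj; rewrite /= inordK. Qed.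
Lemma inord_t2 : (inord 1 : 'I_3) = t2. Proof. by apply: val_inj; rewrite /= inordK. Qed.
Lemma inord_t3 : (inord 2 : 'I_3) = t3. Proof. by apply: val_inj; rewrite /= inordK. Qed.

Lemma xb_slice (z : XA R K) (b : 'I_K -> R) : Xslice z -> xb z.1 b 3 = xb z.1 b 2.
Proof.
move=> /matrixP slz; rewrite /xb /= inord_t2 inord_t3; apply: eq_bigr => k _.
by have := slz k ord0; rewrite !mxE => ->.
Qed.

Lemma x12bB (x : 'M[R]_(K, 3)) (b b' : 'I_K -> R) :
  x12b x b' - x12b x b = \sum_k (x k t2 - x k t1) * (b k - b' k).
Proof.
by rewrite /x12b /xb /= inord_t1 inord_t2 -!sumrB; apply: eq_bigr => k _; ring.
Qed.

Lemma x12bB_Xs (b b' : 'I_K -> R) (z : XA R K) : Xs [ffun k => b' k < b k] z ->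
  0 <= x12b z.1 b' - x12b z.1 b ?= iff [forall k, b k == b' k].
Proof.
move=> Xsz; rewrite x12bB; apply: leif_0_sum => k _; apply/leifP.
have := Xsz k; rewrite ffunE.
case: ltrgtP => [lt_b|lt_b|->] x12; case: ifPn => [/eqP eq_b|/eqP neq_b].
- by move: lt_b; rewrite eq_b ltxx.
- by rewrite mulr_gt0 ?subr_gt0.
- by move: lt_b; rewrite eq_b ltxx.
- by rewrite nmulr_rgt0 ?subr_lt0.
- by rewrite subrr mulr0.
- by case: neq_b.
Qed.

End Regressors.

Section LinearIndex.
Variables (R : realType) (p K : nat).

Definition init_out (y0 : {ffun 'I_p -> bool}) (j : nat) : bool :=
  nth false [seq y0 i | i <- enum 'I_p] j.

Lemma init_out_ord y0 j (ltjp : (j < p)%N) : init_out y0 j = y0 (Ordinal ltjp).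
Proof.
rewrite /init_out (nth_map (Ordinal ltjp)) ?size_enum_ord //.
by congr (y0 _); apply: val_inj; rewrite /= nth_enum_ord.
Qed.

Lemma init_out_default y0 j : (p <= j)%N -> init_out y0 j = false.
Proof. by move=> lepj; rewrite /init_out nth_default // size_map size_enum_ord. Qed.

Lemma init_out_0p j : init_out (y0_0p p) j = false.
Proof.
by case: (ltnP j p) => [ltjp|/init_out_default //]; rewrite (init_out_ord _ ltjp) ffunE.
Qed.

Lemma init_out_1p j : init_out (y0_1p p) j = (j < p)%N.
Proof.
case: (ltnP j p) => [ltjp|lepj]; first by rewrite (init_out_ord _ ltjp) ffunE.
by rewrite init_out_default.
Qed.

Lemma init_out_01 j : init_out (y0_01 p) j = (0 < j < p)%N.
Proof.
case: (ltnP j p) => [ltjp|lepj]; first by rewrite (init_out_ord _ ltjp) ffunE andbT lt0n.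
by rewrite init_out_default ?andbF.
Qed.

Lemma init_out_10 (p0 : (0 < p)%N) j : init_out (y0_10 p) j = (j == 0)%N.
Proof.
case: (ltnP j p) => [ltjp|lepj]; first by rewrite (init_out_ord _ ltjp) ffunE.
by rewrite init_out_default //; case: j lepj => //; rewrite leqNgt p0.
Qed.

(* [hist] stores Y_u at position u + p - 1, so the lags l >= t at time t read initial outcomes. *)
Definition init_index (y0 : {ffun 'I_p -> bool}) (g : 'I_p -> R) (t : nat) : R :=
  \sum_(t <= l < p.+1) (init_out y0 (t + p.-1 - l))%:R * gam g l.

Definition gsum (g : 'I_p -> R) (t : nat) : R := \sum_(t <= l < p.+1) gam g l.

Lemma gsum_recl g t : (t <= p)%N -> gsum g t = gam g t + gsum g t.+1.
Proof. by move=> letp; rewrite /gsum big_ltn. Qed.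

Lemma Ylag_init (y0 : {ffun 'I_p -> bool}) y t l : (0 < t)%N -> (t <= l <= p)%N ->
  Ylag y0 y t l = init_out y0 (t + p.-1 - l).
Proof.
move=> t0 /andP[letl lelp].
by rewrite /Ylag /hist nth_cat size_map size_enum_ord ifT //; lia.
Qed.

Lemma Ylag_recent (p0 : (0 < p)%N) (y0 : {ffun 'I_p -> bool}) y t l :
  (l < t <= 3)%N -> (0 < l)%N -> Ylag y0 y t l = Yt y (t - l).
Proof.
move=> /andP[ltlt let3] l0.
rewrite /Ylag /hist nth_cat size_map size_enum_ord ifF; last by lia.
by rewrite /Yt; congr nth; lia.
Qed.

Lemma lindex1 (y0 : {ffun 'I_p -> bool}) y (x : 'M[R]_(K, 3)) a b g :
  lindex y0 y x a b g 1 = xb x b 1 + init_index y0 g 1 + a.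
Proof.
rewrite /lindex; congr (_ + _ + _); apply: eq_big_nat => l /andP[l1 lp].
by rewrite Ylag_init //; lia.
Qed.

Lemma lindex2 (p0 : (0 < p)%N) (y0 : {ffun 'I_p -> bool}) y (x : 'M[R]_(K, 3)) a b g :
  lindex y0 y x a b g 2 = xb x b 2 + (Yt y 1)%:R * gam g 1 + init_index y0 g 2 + a.
Proof.
rewrite /lindex big_ltn; last by lia.
rewrite Ylag_recent // addrA; congr (_ + _ + _ + _); apply: eq_big_nat => l /andP[l2 lp].
by rewrite Ylag_init //; lia.
Qed.

Lemma lindex3 (hp : (1 < p)%N) (y0 : {ffun 'I_p -> bool}) y (x : 'M[R]_(K, 3)) a b g :
  lindex y0 y x a b g 3 =
  xb x b 3 + (Yt y 2)%:R * gam g 1 + (Yt y 1)%:R * gam g 2 + init_index y0 g 3 + a.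
Proof.
rewrite /lindex big_ltn; last by lia.
rewrite big_ltn; last by lia.
rewrite !Ylag_recent ?(ltnW hp) // !addrA; congr (_ + _ + _ + _ + _).
apply: eq_big_nat => l /andP[l3 lp].
by rewrite Ylag_init //; lia.
Qed.

Lemma init_index_0p g t : init_index (y0_0p p) g t = 0.
Proof. by rewrite /init_index big1 // => l _; rewrite init_out_0p mul0r. Qed.

Lemma init_index_1p g t : (0 < t)%N -> init_index (y0_1p p) g t = gsum g t.
Proof.
move=> t0; apply: eq_big_nat => l /andP[tl lp].
by rewrite init_out_1p (_ : (_ < p)%N = true) ?mul1r //; lia.
Qed.

Lemma init_index_01_1 (p0 : (0 < p)%N) g : init_index (y0_01 p) g 1 = gsum g 1 - gam g p.
Proof.
rewrite /init_index /gsum !big_nat_recr /= ?init_out_01; try lia.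
rewrite (_ : (0 < _ < p)%N = false) ?mul0r ?addr0 ?addrK; last by lia.
apply: eq_big_nat => l /andP[l1 lp].
by rewrite init_out_01 (_ : (0 < _ < p)%N = true) ?mul1r //; lia.
Qed.

Lemma init_index_01 g t : (1 < t)%N -> init_index (y0_01 p) g t = gsum g t.
Proof.
move=> t1; apply: eq_big_nat => l /andP[tl lp].
by rewrite init_out_01 (_ : (0 < _ < p)%N = true) ?mul1r //; lia.
Qed.

Lemma init_index_10_1 (p0 : (0 < p)%N) g : init_index (y0_10 p) g 1 = gam g p.
Proof.
rewrite /init_index big_nat_recr /= ?(init_out_10 p0); last by lia.
rewrite (_ : (_ == 0)%N = true) ?mul1r; last by lia.
rewrite big1_seq ?add0r // => l /andP[_]; rewrite mem_index_iota => /andP[l1 lp].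
by rewrite (init_out_10 p0) (_ : (_ == 0)%N = false) ?mul0r //; lia.
Qed.

Lemma init_index_10 (p0 : (0 < p)%N) g t : (1 < t)%N -> init_index (y0_10 p) g t = 0.
Proof.
move=> t1; rewrite /init_index big1_seq // => l /andP[_].
rewrite mem_index_iota => /andP[tl lp].
by rewrite (init_out_10 p0) (_ : (_ == 0)%N = false) ?mul0r //; lia.
Qed.

End LinearIndex.

Ltac exp_pos := repeat first
  [ exact: expR_gt0 | exact: ltr01 | apply: addr_gt0 | apply: mulr_gt0 | apply: divr_gt0 ].
Ltac exp_neq0 := repeat (apply/andP; split); apply: lt0r_neq0; exp_pos.

Section ConditionalMoment.
Variables (R : realType) (p K : nat).
Hypothesis hp : (2 <= p)%N.

Lemma sum_bool3 (F : bool * bool * bool -> R) :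
  \sum_(y : bool * bool * bool) F y =
  F (true, true, true) + F (true, true, false) +
    (F (true, false, true) + F (true, false, false)) +
  (F (false, true, true) + F (false, true, false) +
    (F (false, false, true) + F (false, false, false))).
Proof.
have pair_sum (T : finType) (G : T * bool -> R) :
    \sum_(u : T * bool) G u = \sum_(a : T) \sum_(c : bool) G (a, c).
  by rewrite pair_big; apply: eq_bigr => -[].
by rewrite pair_sum pair_sum !big_bool.
Qed.

Lemma prob3 (y0 : {ffun 'I_p -> bool}) (x : 'M[R]_(K, 3)) a b g y :
  prob y0 x a b g y =
  (if Yt y 1 then logistic (lindex y0 y x a b g 1) else 1 - logistic (lindex y0 y x a b g 1)) *
  (if Yt y 2 then logistic (lindex y0 y x a b g 2) else 1 - logistic (lindex y0 y x a b g 2)) *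
  (if Yt y 3 then logistic (lindex y0 y x a b g 3) else 1 - logistic (lindex y0 y x a b g 3)).
Proof. by rewrite /prob 3?big_ltn // big_geq // mulr1 !mulrA. Qed.

Lemma onem_logistic (u : R) : 1 - logistic u = (1 + expR u)^-1.
Proof.
have : 1 + expR u != 0 by rewrite lt0r_neq0 // addr_gt0 ?expR_gt0.
by rewrite /logistic => ?; field.
Qed.

Let i0 : 'I_p := Ordinal (ltnW hp).
Let i1 : 'I_p := Ordinal hp.

Lemma mom_0p : mom (y0_0p p) = @m_0p R p K.
Proof. by rewrite /mom eqxx. Qed.

Lemma mom_1p : mom (y0_1p p) = @m_1p R p K.
Proof. by rewrite /mom ifN ?eqxx //; apply/eqP => /ffunP/(_ i0); rewrite !ffunE. Qed.

Lemma mom_01 : mom (y0_01 p) = @m_01 R p K.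
Proof.
rewrite /mom ifN; last by apply/eqP => /ffunP/(_ i1); rewrite !ffunE.
by rewrite ifN ?eqxx //; apply/eqP => /ffunP/(_ i0); rewrite !ffunE.
Qed.

Lemma mom_10 : mom (y0_10 p) = @m_10 R p K.
Proof.
rewrite /mom ifN; last by apply/eqP => /ffunP/(_ i0); rewrite !ffunE.
rewrite ifN; last by apply/eqP => /ffunP/(_ i1); rewrite !ffunE.
by rewrite ifN ?eqxx //; apply/eqP => /ffunP/(_ i0); rewrite !ffunE.
Qed.

Lemma cmom_0p_slice b0 g0 b g (z : XA R K) : Xslice z ->
  exists w E, [/\ 0 < w, 0 < E &
    cmom b0 g0 (y0_0p p) b g z =
    w * expgap E (x12b z.1 b - x12b z.1 b0) (gam g0 1 - gam g 1)].
Proof.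
move=> /(xb_slice b0) x3.
exists (expR (xb z.1 b0 1 + z.2) / ((1 + expR (xb z.1 b0 1 + z.2)) *
  (1 + expR (xb z.1 b0 2 + z.2 + gam g0 1)) * (1 + expR (xb z.1 b0 2 + z.2)))).
exists (expR (xb z.1 b0 2 + z.2)); split; [by exp_pos | exact: expR_gt0 |].
rewrite /cmom mom_0p sum_bool3 /m_0p !mulr0 !addr0 !add0r !prob3 /Yt /=.
rewrite !lindex1 !(lindex2 (ltnW hp)) !(lindex3 hp) !init_index_0p x3 /=.
rewrite ?mulr1n ?mulr0n ?mul0r ?mul1r ?addr0 ?add0r.
rewrite /expgap /x12b !onem_logistic /logistic !(expRD, expRN).
by field; exp_neq0.
Qed.

Let gsum1 (g : 'I_p -> R) : gsum g 1 = gam g 1 + gam g 2 + gsum g 3.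
Proof. by rewrite (gsum_recl g (ltnW hp)) (gsum_recl g hp) addrA. Qed.

Let gsum2 (g : 'I_p -> R) : gsum g 2 = gam g 2 + gsum g 3.
Proof. exact: gsum_recl. Qed.

Lemma cmom_1p_slice b0 g0 b g (z : XA R K) : Xslice z ->
  exists w E, [/\ 0 < w, 0 < E &
    cmom b0 g0 (y0_1p p) b g z =
    w * expgap E (x12b z.1 b0 - x12b z.1 b) (gam g0 1 - gam g 1)].
Proof.
move=> /(xb_slice b0) x3.
exists (expR (xb z.1 b0 2 + gsum g0 2 + z.2) * expR (xb z.1 b0 2 + gsum g0 2 + z.2 + gam g0 1) /
  ((1 + expR (xb z.1 b0 1 + gsum g0 1 + z.2)) * (1 + expR (xb z.1 b0 2 + gsum g0 2 + z.2)) *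
   (1 + expR (xb z.1 b0 2 + gsum g0 2 + z.2 + gam g0 1)))).
exists (expR (- (xb z.1 b0 2 + gsum g0 2 + z.2 + gam g0 1))).
split; [by exp_pos | exact: expR_gt0 |].
rewrite /cmom mom_1p sum_bool3 /m_1p !mulr0 !addr0 !add0r !prob3 /Yt /=.
rewrite !lindex1 !(lindex2 (ltnW hp)) !(lindex3 hp) !init_index_1p // x3 /=.
rewrite ?mulr1n ?mulr0n ?mul0r ?mul1r ?addr0 ?add0r !gsum1 !gsum2.
rewrite /expgap /x12b /x21b !onem_logistic /logistic !(expRD, expRN).
by field; exp_neq0.
Qed.

Lemma cmom_01_slice b0 g0 g : gam g 1 = gam g0 1 -> forall z : XA R K, Xslice z ->
  exists2 w, 0 < w &
    cmom b0 g0 (y0_01 p) b0 g z = w * (expR (gam g p - gam g0 p) - 1).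
Proof.
move=> g1 z /(xb_slice b0) x3.
exists (expR (xb z.1 b0 2 + gsum g0 2 + z.2) /
  ((1 + expR (xb z.1 b0 1 + (gsum g0 1 - gam g0 p) + z.2)) *
   (1 + expR (xb z.1 b0 2 + gsum g0 2 + z.2)))); first by exp_pos.
rewrite /cmom mom_01 sum_bool3 /m_01 !mulr0 !addr0 !add0r !prob3 /Yt /=.
rewrite !lindex1 !(lindex2 (ltnW hp)) !(lindex3 hp).
rewrite (init_index_01_1 (ltnW hp)) !init_index_01 // x3 /=.
rewrite ?mulr1n ?mulr0n ?mul0r ?mul1r ?addr0 ?add0r !gsum1 !gsum2 g1.
rewrite /x21b !onem_logistic /logistic !(expRD, expRN).
by field; exp_neq0.
Qed.

Lemma cmom_10_slice b0 g0 g : gam g 1 = gam g0 1 -> forall z : XA R K, Xslice z ->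
  exists2 w, 0 < w &
    cmom b0 g0 (y0_10 p) b0 g z = w * (expR (gam g p - gam g0 p) - 1).
Proof.
move=> g1 z /(xb_slice b0) x3.
exists (expR (xb z.1 b0 1 + gam g0 p + z.2) /
  ((1 + expR (xb z.1 b0 1 + gam g0 p + z.2)) *
   (1 + expR (xb z.1 b0 2 + z.2 + gam g0 1)))); first by exp_pos.
rewrite /cmom mom_10 sum_bool3 /m_10 !mulr0 !addr0 !add0r !prob3 /Yt /=.
rewrite !lindex1 !(lindex2 (ltnW hp)) !(lindex3 hp).
rewrite (init_index_10_1 (ltnW hp)) !(init_index_10 (ltnW hp)) // x3 /=.
rewrite ?mulr1n ?mulr0n ?mul0r ?mul1r ?addr0 ?add0r g1.
rewrite /x12b !onem_logistic /logistic !(expRD, expRN).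
by field; exp_neq0.
Qed.

End ConditionalMoment.

Section Identification.
Variables (R : realType) (K : nat).

Lemma expgap_moments_eq0 (nu : {ffun 'I_K -> bool} -> probability (XA R K) R)
    (f : XA R K -> R) (b b' : 'I_K -> R) (c c0 : R) :
  (forall s, nu s (Xs s `&` @Xslice R K) = 1%E) ->
  (forall s, (nu s).-integrable setT (fun z => (f z)%:E)) ->
  (forall z, Xslice z -> exists w E, [/\ 0 < w, 0 < E &
     f z = w * expgap E (x12b z.1 b - x12b z.1 b') (c0 - c)]) ->
  (forall s, \int[nu s]_z (f z)%:E = 0)%E <-> b = b' /\ c = c0.
Proof.
move=> nu_slice intf closed_form.
have mS s : measurable (Xs s `&` @Xslice R K).
  exact: measurableI (measurable_Xs s) (@measurable_Xslice R K).
split=> [int0|[eq_b eq_c] s]; last first.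
  apply: integral_eq0_as (mS s) (nu_slice s) (intf s) _ => z [_ /closed_form[w [E [_ _ ->]]]].
  by rewrite eq_b eq_c !subrr expgap00 mulr0.
have [c_lt_c0|c0_le_c] := ltrP c c0.
  pose s := [ffun k => b k < b' k].
  suff : (0 < \int[nu s]_z (f z)%:E)%E by rewrite int0 ltxx.
  apply: integral_gt0_as (mS s) (nu_slice s) (intf s) _ => z [Xsz /closed_form[w [E [w0 E0 ->]]]].
  have slope := Order.le_of_leif (x12bB_Xs Xsz).
  by rewrite mulr_gt0 // expgap_gt0 ?subr_gt0.
pose s := [ffun k => b' k < b k].
have strict_lt0 : ~~ [forall k, b k == b' k] \/ c0 - c < 0 -> False.
  move=> strict; suff : (\int[nu s]_z (f z)%:E < 0)%E by rewrite int0 ltxx.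
  apply: integral_lt0_as (mS s) (nu_slice s) (intf s) _ => z [Xsz /closed_form[w [E [w0 E0 ->]]]].
  have slope := x12bB_Xs Xsz.
  rewrite pmulr_rlt0 //; apply: expgap_lt0 => //.
  - by rewrite subr_le0 -subr_ge0 (Order.le_of_leif slope).
  - by rewrite subr_le0.
  - case: strict => [neq|]; [left | by right].
    by rewrite subr_lt0 -subr_gt0 (lt_leif slope).
split.
  have /forallP eq_b : [forall k, b k == b' k] by apply/negPn/negP => neq; apply: strict_lt0; left.
  by apply/funext => k; apply/eqP.
apply/eqP; rewrite eq_le c0_le_c andbT -subr_ge0 leNgt; apply/negP => lt0.
by apply: strict_lt0; right.
Qed.

Lemma expm1_moment_eq0 (nu : probability (XA R K) R) (f : XA R K -> R) (u : R) :
  nu (@Xslice R K) = 1%E -> nu.-integrable setT (fun z => (f z)%:E) ->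
  (forall z, Xslice z -> exists2 w, 0 < w & f z = w * (expR u - 1)) ->
  (\int[nu]_z (f z)%:E = 0)%E <-> u = 0.
Proof.
move=> nu_slice intf closed_form; have mS := @measurable_Xslice R K.
split=> [int0|u0]; last first.
  apply: integral_eq0_as mS nu_slice intf _ => z /closed_form[w _ ->].
  by rewrite u0 expR0 subrr mulr0.
case: (ltgtP u 0) => // [u_lt0|u_gt0].
- suff : (\int[nu]_z (f z)%:E < 0)%E by rewrite int0 ltxx.
  apply: integral_lt0_as mS nu_slice intf _ => z /closed_form[w w0 ->].
  by rewrite pmulr_rlt0 // subr_lt0 expR_lt1.
- suff : (0 < \int[nu]_z (f z)%:E)%E by rewrite int0 ltxx.
  apply: integral_gt0_as mS nu_slice intf _ => z /closed_form[w w0 ->].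
  by rewrite pmulr_rgt0 // subr_gt0 expR_gt1.
Qed.

End Identification.

Theorem theorem2 (R : realType) (p K : nat) (hp : (2 <= p)%N)
  (b0 : 'I_K -> R) (g0 : 'I_p -> R)
  (mu : {ffun 'I_p -> bool} -> {measure set XA R K -> \bar R})
  (hmu : (\sum_(y0 : {ffun 'I_p -> bool}) mu y0 setT = 1)%E) :
  (* (i) *)
  (forall y0 : {ffun 'I_p -> bool}, y0 = y0_0p p \/ y0 = y0_1p p ->
    (forall (s : {ffun 'I_K -> bool}) (e : R), 0 < e ->
       (0 < mu y0 (Xs s `&` Xnear e))%E) ->
    forall nu : {ffun 'I_K -> bool} -> probability (XA R K) R,
    (forall s, cond_law_slice (mu y0) (Xs s) (nu s)) ->
    forall (b : 'I_K -> R) (g : 'I_p -> R),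
    (forall s, (nu s).-integrable setT (fun z => (cmom b0 g0 y0 b g z)%:E)) ->
    ((forall s, CE b0 g0 y0 (nu s) b g = 0%E) <-> (b = b0 /\ gam g 1 = gam g0 1)))
  /\
  (* (ii) *)
  (forall y0 : {ffun 'I_p -> bool}, y0 = y0_01 p \/ y0 = y0_10 p ->
    (forall e : R, 0 < e -> (0 < mu y0 (Xnear e))%E) ->
    forall nu : probability (XA R K) R,
    cond_law_slice (mu y0) setT nu ->
    forall g : 'I_p -> R, gam g 1 = gam g0 1 ->
    nu.-integrable setT (fun z => (cmom b0 g0 y0 b0 g z)%:E) ->
    (CE b0 g0 y0 nu b0 g = 0%E <-> gam g p = gam g0 p)).
Proof.
split=> y0 y0E _ nu nu_cond.
- move=> b g intm; have slice s : nu s (Xs s `&` @Xslice R K) = 1%E by case: (nu_cond s).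
  case: y0E => ?; subst y0.
    exact: expgap_moments_eq0 slice intm (cmom_0p_slice hp b0 g0 b g).
  apply: iff_trans (expgap_moments_eq0 slice intm (cmom_1p_slice hp b0 g0 b g)) _.
  by split=> -[-> ->].
- move=> g g1 intm; have slice : nu (@Xslice R K) = 1%E by case: nu_cond; rewrite setTI.
  apply: iff_trans (_ : gam g p - gam g0 p = 0 <-> _); last first.
    by split=> [/eqP|->]; rewrite ?subr_eq0 ?subrr // => /eqP.
  case: y0E => ?; subst y0.
    exact: expm1_moment_eq0 slice intm (cmom_01_slice hp b0 g1).
  exact: expm1_moment_eq0 slice intm (cmom_10_slice hp b0 g1).
Qed.
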